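(* Let $\Sigma$ be a finite alphabet, $\mathcal F\subseteq\Sigma^{\Sigma^*}$ and $T\in\mathbb N_+$, and let $\mathcal L(\mathcal F^{\mathrm{CoT}(T)})$ be the associated CoT loss class. If $\Sigma=\{0,1\}$, then $$\mathrm{VCdim}(\mathcal L(\mathcal F^{\mathrm{CoT}(T)}))\le3\,\mathrm{VCdim}(\mathcal F)\log_2\!\left(\frac{2T}{\ln2}\right).$$ For any non-binary finite $\Sigma$, $$\mathrm{VCdim}(\mathcal L(\mathcal F^{\mathrm{CoT}(T)}))\le3\,\mathrm{Ndim}(\mathcal F)\log_2\!\left(\frac{2\,\mathrm{Ndim}(\mathcal F)\,|\Sigma|^2\,T}{e\ln2}\right).$$
   Context: For $f:\Sigma^*\to\Sigma$, $\bar f(\mathbf x)$ is $\mathbf x$ with $f(\mathbf x)$ appended and $f^{\mathrm{CoT}(T)}=\bar f^{\circ T}$. The loss class $\mathcal L(\mathcal F^{\mathrm{CoT}(T)})=\{\ell_f:f\in\mathcal F\}$ consists of the $\{0,1\}$-valued functions on strings $\mathbf z$ (of length at least $T$) given by $\ell_f(\mathbf z)=\mathbf 1[\mathbf z\ne f^{\mathrm{CoT}(T)}(\mathbf x)]$, where $\mathbf x$ is $\mathbf z$ with its last $T$ tokens removed. $\mathrm{VCdim}$ is VC dimension. Natarajan dimension $\mathrm{Ndim}(\mathcal H)$: the largest size of a set $S$ for which there are $h_0,h_1$ with $h_0(\mathbf x)\ne h_1(\mathbf x)$ on $S$ such that for every $U\subseteq S$ some $h\in\mathcal H$ agrees with $h_0$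 on $U$ and with $h_1$ on $S\setminus U$. *)

From mathcomp Require Import all_boot.
From Stdlib Require Import Reals.

Set Implicit Arguments.
Unset Strict Implicit.
Unset Printing Implicit Defensive.

Definition cot_step (S : Type) (f : seq S -> S) (x : seq S) : seq S :=
  rcons x (f x).

Definition cot (S : Type) (f : seq S -> S) (T : nat) : seq S -> seq S :=
  iter T (cot_step f).

Definition cot_loss (S : eqType) (f : seq S -> S) (T : nat) (z : seq S) : bool :=
  z != cot f T (take (size z - T) z).

Definition loss_class (S : eqType) (F : (seq S -> S) -> Prop) (T : nat)
  : (seq S -> bool) -> Prop :=
  fun l => exists f, F f /\ l = cot_loss f T.

Definition vc_shatters (X : eqType) (H : (X -> bool) -> Prop) (P : seq X) : Prop :=
  forall lab : X -> bool, exists h, H h /\ forall x, x \in P -> h x = lab x.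

Definition is_VCdim (X : eqType) (H : (X -> bool) -> Prop) (d : nat) : Prop :=
  (exists P, uniq P /\ size P = d /\ vc_shatters H P) /\
  (forall P, uniq P -> vc_shatters H P -> size P <= d).

Definition nat_shatters (X Y : eqType) (H : (X -> Y) -> Prop) (P : seq X) : Prop :=
  exists h0 h1 : X -> Y,
    (forall x, x \in P -> h0 x != h1 x) /\
    forall U : X -> bool, exists h, H h /\
      forall x, x \in P -> h x = (if U x then h0 x else h1 x).

Definition is_Ndim (X Y : eqType) (H : (X -> Y) -> Prop) (d : nat) : Prop :=
  (exists P, uniq P /\ size P = d /\ nat_shatters H P) /\
  (forall P, uniq P -> nat_shatters H P -> size P <= d).

Definition log2 (x : R) : R := (ln x / ln 2)%R.

(* If the loss class shatters m strings of length at least T, each of the 2^m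
   labelings is realised by some f in F, and the loss of f on a string z only
   depends on the values of f on the T prefixes of z that the chain of thought
   queries.  Hence F has at least 2^m distinct behaviours on a set of at most
   mT strings.  Natarajan's version of the Sauer-Shelah lemma bounds their
   number by \sum_(i <= n) 'C(mT, i) 'C(|Sigma|, 2)^i, where n is the
   Natarajan dimension of F (its VC dimension when Sigma = {0, 1}, for which
   'C(2, 2) = 1).  This gives 2^m <= (e mT / d)^d in the binary case and
   2^m <= (mT |Sigma|^2)^n in general, and solving for m with ln y <= y - 1
   yields the two bounds. *)

From mathcomp Require Import all_boot zify.
From Stdlib Require Import Reals Lra ClassicalEpsilon.
(* [Reals] rebinds [^] on [nat] to [Nat.pow]; restore ssrnat's [expn]. *)
Import ssrnat.

Set Implicit Arguments.
Unset Strict Implicit.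
Unset Printing Implicit Defensive.

(* [sauer_bound c N n = \sum_(i <= n) 'C(N, i) * c ^ i] *)
Fixpoint sauer_bound (c N n : nat) : nat :=
  if N is N'.+1 then
    sauer_bound c N' n + (if n is n'.+1 then c * sauer_bound c N' n' else 0)
  else 1.

Lemma sauer_bound0 c N : sauer_bound c N 0 = 1.
Proof. by elim: N => //= N ->. Qed.

Lemma leq_sauer_bound c n : {homo sauer_bound c ^~ n : N N' / N <= N'}.
Proof. by apply: homo_leq => [//|? ? ?|N]; [apply: leq_trans | apply: leq_addr]. Qed.

Lemma sauer_bound_le_expn c N n : 0 < c -> sauer_bound c N n <= (N.+1 * c) ^ n.
Proof.
move=> c0; elim: N n => [|N IH] [|n] /=;
  rewrite ?sauer_bound0 ?expn_gt0 ?orbT ?mul1n ?c0 //.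
apply: leq_trans (leq_add (IH n.+1) (leq_mul (leqnn c) (IH n))) _.
have : (N.+1 * c) ^ n <= (N.+2 * c) ^ n.
  by case: n {IH} => // n; rewrite leq_exp2r // leq_mul2r leqnSn orbT.
rewrite !expnS; nia.
Qed.

Lemma card_bigcup_seq_le (T J : finType) (A : J -> {set T}) (s : seq J) :
  #|\bigcup_(j <- s) A j| <= \sum_(j <- s) #|A j|.
Proof.
elim: s => [|j s IH]; first by rewrite !big_nil cards0.
by rewrite !big_cons; apply: leq_trans (leq_card_setU _ _) (leq_add _ IH).
Qed.

Lemma sum_card_le_bigcup (T J : finType) (A : J -> {set T}) M :
  (forall j j', j != j' -> #|A j :&: A j'| <= M) ->
  \sum_j #|A j| <= #|\bigcup_j A j| + 'C(#|J|, 2) * M.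
Proof.
move=> AM; rewrite [#|J|]cardE -!big_enum /=.
elim: (enum J) (enum_uniq J) => [|j s IH] /=; first by rewrite !big_nil.
case/andP=> js /IH {}IH; rewrite !big_cons binS bin1 mulnDl.
have meet : #|A j :&: \bigcup_(j' <- s) A j'| <= size s * M.
  rewrite big_distrr /=; apply: leq_trans (card_bigcup_seq_le _ _) _.
  rewrite -[size s]count_predT -sum1_count big_distrl /= !big_seq.
  apply: leq_sum => j' j's; rewrite mul1n AM //; by apply: contraNneq js => ->.
have := cardsUI (A j) (\bigcup_(j' <- s) A j').
lia.
Qed.

Section NatarajanLemma.

Variables (Y I : finType) (y0 : Y).
Implicit Types (G H : {set {ffun I -> Y}}) (D S : {set I}).

Definition nshatters H S : Prop :=
  exists h0 h1 : I -> Y, (forall i, i \in S -> h0 i != h1 i) /\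
    forall U : {set I}, exists2 g, g \in H &
      forall i, i \in S -> g i = if i \in U then h0 i else h1 i.

Definition restr D (h : {ffun I -> Y}) : {ffun I -> Y} :=
  [ffun i => if i \in D then h i else y0].

Lemma nshatters_set0 H : H != set0 -> nshatters H set0.
Proof.
case/set0Pn=> g gH; exists (fun=> y0), (fun=> y0).
by split=> [i|U]; [rewrite inE | exists g => // i; rewrite inE].
Qed.

Lemma nshatters_agree G H S :
  (forall g, g \in G -> exists2 h, h \in H & {in S, g =1 h}) ->
  nshatters G S -> nshatters H S.
Proof.
move=> GH [h0 [h1 [h01 shG]]]; exists h0, h1; split=> // U.
have [g gG gU] := shG U; have [h hH gh] := GH g gG.
by exists h => // i iS; rewrite -gh ?gU.
Qed.

Lemma nshatters_setU1 G G' H S x y y' :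
  y != y' ->
  (forall g, g \in G -> exists2 h, h \in H & h x = y /\ {in S, g =1 h}) ->
  (forall g, g \in G' -> exists2 h, h \in H & h x = y' /\ {in S, g =1 h}) ->
  nshatters (G :&: G') S -> nshatters H (x |: S).
Proof.
move=> yy' GH G'H [h0 [h1 [h01 shG]]].
exists (fun i => if i == x then y else h0 i), (fun i => if i == x then y' else h1 i).
split=> [i|U]; first by rewrite in_setU1; case: eqP => //= _; apply: h01.
have [g /setIP [gG gG'] gU] := shG U.
have [h hH [hx gh]] :
    exists2 h, h \in H & h x = (if x \in U then y else y') /\ {in S, g =1 h}.
  by case: (x \in U); [apply: GH | apply: G'H].
exists h => // i; rewrite in_setU1; case: eqP => [-> _|_ /= iS].
  by rewrite hx; case: (x \in U).
by rewrite -gh ?gU.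
Qed.

Definition restr_fiber D H x y := restr (D :\ x) @: [set h in H | h x == y].

Lemma restr_fiber_id D H x y :
  {in restr_fiber D H x y, forall g, restr (D :\ x) g = g}.
Proof.
move=> _ /imsetP [h _ ->].
by apply/ffunP => i; rewrite !ffunE; case: (i \in D :\ x).
Qed.

Lemma restr_fiber_lift D H x y S : S \subset D :\ x ->
  forall g, g \in restr_fiber D H x y ->
  exists2 h, h \in H & h x = y /\ {in S, g =1 h}.
Proof.
move=> SD g /imsetP [h]; rewrite inE => /andP [hH /eqP hx] ->.
by exists h => //; split=> // i /(subsetP SD) iD; rewrite ffunE iD.
Qed.

Lemma card_restr_fiber D H x y : {in H, forall h, restr D h = h} ->
  #|restr_fiber D H x y| = #|[set h in H | h x == y]|.
Proof.
move=> suppH; apply: card_in_imset => h h'.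
rewrite !inE => /andP [hH /eqP hx] /andP [h'H /eqP h'x] /ffunP E.
rewrite -(suppH h hH) -(suppH h' h'H); apply/ffunP => i; rewrite !ffunE.
have := E i; rewrite !ffunE in_setD1.
by case: eqP => [->|_] //=; rewrite hx h'x.
Qed.

Lemma card_le_restr_fibers D H x M : {in H, forall h, restr D h = h} ->
  (forall y y', y != y' ->
     #|restr_fiber D H x y :&: restr_fiber D H x y'| <= M) ->
  #|H| <= #|\bigcup_y restr_fiber D H x y| + 'C(#|Y|, 2) * M.
Proof.
move=> suppH /sum_card_le_bigcup; apply: leq_trans.
rewrite -sum1_card (partition_big (fun h : {ffun I -> Y} => h x) xpredT) //=.
apply/leq_sum => y _; rewrite card_restr_fiber // sum1dep_card.
by apply/eq_leq/eq_card => h; rewrite !inE.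
Qed.

Lemma card_le_sauer_bound n N D H :
  #|D| = N -> {in H, forall h, restr D h = h} ->
  (forall S, S \subset D -> nshatters H S -> #|S| <= n) ->
  #|H| <= sauer_bound 'C(#|Y|, 2) N n.
Proof.
elim: N n D H => [|N IH] n D H cardD suppH dimH.
  have D0 : D = set0 by apply/eqP; rewrite -cards_eq0 cardD.
  rewrite /= -(cards1 ([ffun=> y0] : {ffun I -> Y})).
  apply/subset_leq_card/subsetP => h hH; rewrite inE -(suppH h hH) D0.
  by apply/eqP/ffunP => i; rewrite !ffunE inE.
have [x xD] : exists x, x \in D by apply/card_gt0P; rewrite cardD.
have cardD' : #|D :\ x| = N.
  by move: (cardsD1 x D); rewrite xD cardD add1n => -[].
have subD' S : S \subset D :\ x -> S \subset D.
  by move/subset_trans; apply; apply: subD1set.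
pose A := restr_fiber D H x.
pose M := if n is n'.+1 then sauer_bound 'C(#|Y|, 2) N n' else 0.
(* A set shattered by two distinct fibres is shattered by H together with x. *)
have cardAI y y' : y != y' -> #|A y :&: A y'| <= M.
  move=> yy'; have dimAI S : S \subset D :\ x -> nshatters (A y :&: A y') S -> #|S| < n.
    move=> SD' /(nshatters_setU1 yy' (restr_fiber_lift SD') (restr_fiber_lift SD')) shS.
    have xS : x \notin S by apply: contra (subsetP SD' x) _; rewrite !inE eqxx.
    have := dimH (x |: S); rewrite cardsU1 xS; apply=> //.
    by rewrite subUset sub1set xD subD'.
  rewrite /M; case: n {dimH M} dimAI => [|n'] dimAI.
    rewrite leqn0 cards_eq0; apply: contraT => /nshatters_set0 sh0.
    by have := dimAI set0 (sub0set _) sh0.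
  apply: IH cardD' _ dimAI => g /setIP [gA _]; exact: restr_fiber_id gA.
have cardUA : #|\bigcup_y A y| <= sauer_bound 'C(#|Y|, 2) N n.
  apply: IH cardD' _ _ => [g /bigcupP [y _ /restr_fiber_id //]|S SD' shS].
  apply: dimH (subD' S SD') _; apply: nshatters_agree shS => g.
  by case/bigcupP=> y _ /(restr_fiber_lift SD') [h hH [_ gh]]; exists h.
apply: leq_trans (card_le_restr_fibers suppH cardAI) _.
by apply: leq_add cardUA _; rewrite /M; case: (n) => [|n']; rewrite ?muln0.
Qed.

End NatarajanLemma.

Lemma cot_cat (Y : Type) (f : seq Y -> Y) T x : exists s, cot f T x = x ++ s.
Proof.
elim: T x => [|T IH] x; first by exists [::]; rewrite cats0.
have [s E] := IH (cot_step f x); exists (f x :: s).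
by rewrite /cot iterSr -/(cot f T _) E /cot_step cat_rcons.
Qed.

Lemma cot_eq_agree (Y : eqType) (f g : seq Y -> Y) T x z :
  (forall j, j < T -> f (take (size x + j) z) = g (take (size x + j) z)) ->
  (cot f T x == z) = (cot g T x == z).
Proof.
elim: T x => [|T IH] x fg //.
have [xz|xz] := eqVneq x (take (size x) z).
  have fgx : f x = g x by have := fg 0 isT; rewrite addn0 -xz.
  rewrite /cot !iterSr /cot_step fgx; apply: IH => j jT.
  by rewrite size_rcons addSnnS; apply: fg.
have cot_neq h : (cot h T.+1 x == z) = false.
  apply/negbTE/eqP => E; have [s Es] := cot_cat h T.+1 x.
  by move: xz; rewrite -E Es take_size_cat ?eqxx.
by rewrite !cot_neq.
Qed.

Definition cot_queries (Y : Type) T (z : seq Y) : seq (seq Y) :=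
  [seq take (size z - T + j) z | j <- iota 0 T].

Lemma cot_loss_agree (Y : eqType) (f g : seq Y -> Y) T z :
  T <= size z -> {in cot_queries T z, f =1 g} -> cot_loss f T z = cot_loss g T z.
Proof.
move=> Tz fg; rewrite /cot_loss !(eq_sym z) (@cot_eq_agree _ f g) // => j jT.
by rewrite size_takel ?leq_subr //; apply: fg; apply/mapP; exists j; rewrite ?mem_iota.
Qed.

Lemma nat_shatters_vc (X : eqType) (F : (X -> bool) -> Prop) P :
  nat_shatters F P -> vc_shatters F P.
Proof.
move=> [h0 [h1 [h01 shF]]] lab; have [h [Fh hP]] := shF (fun x => h0 x == lab x).
exists h; split=> // x xP; rewrite hP //.
by move: (h01 x xP); case: (h0 x); case: (h1 x); case: (lab x).
Qed.

Section Traces.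

Variables (X : choiceType) (Y : finType) (Q : seq X).

Definition trace (f : X -> Y) : {ffun seq_sub Q -> Y} := [ffun i => f (val i)].

Lemma nat_shatters_trace (F : (X -> Y) -> Prop) (y0 : Y)
    (H : {set {ffun seq_sub Q -> Y}}) S :
  (forall h, h \in H -> exists2 f, F f & h = trace f) ->
  nshatters H S -> nat_shatters F [seq val i | i <- enum S].
Proof.
move=> HF [h0 [h1 [h01 shH]]].
pose ext (h : seq_sub Q -> Y) q := if insub q is Some i then h i else y0.
exists (ext h0), (ext h1); split.
  by move=> _ /mapP [i iS ->]; rewrite /ext valK; apply: h01; rewrite mem_enum in iS.
move=> U; have [g gH gU] := shH [set i | U (val i)].
have [f Ff gf] := HF g gH; exists f; split=> // _ /mapP [i iS ->].
rewrite mem_enum in iS; have := gU i iS; rewrite gf ffunE inE /ext valK => ->.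
by case: (U _).
Qed.

End Traces.

Lemma loss_shatters_traces (Y : finType) (F : (seq Y -> Y) -> Prop) T
    (P Q : seq (seq Y)) :
  uniq P -> all (fun z => T <= size z) P -> vc_shatters (loss_class F T) P ->
  (forall z, z \in P -> {subset cot_queries T z <= Q}) ->
  exists H : {set {ffun seq_sub Q -> Y}},
    #|H| = 2 ^ size P /\ forall h, h \in H -> exists2 f, F f & h = trace Q f.
Proof.
move=> uP /allP TP shP PQ; set m := size P.
pose lab (t : m.-tuple bool) z := nth false t (index z P).
have /ClassicalEpsilon.choice [g gP] : forall t : m.-tuple bool,
    exists f, F f /\ {in P, forall z, cot_loss f T z = lab t z}.
  by move=> t; have [_ [[f [Ff ->]] fP]] := shP (lab t); exists f.
exists [set trace Q (g t) | t : m.-tuple bool]; split; last first.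
  by move=> _ /imsetP [t _ ->]; exists (g t); first exact: (gP t).1.
rewrite card_imset ?card_tuple ?card_bool // => t1 t2 /ffunP g12.
have lab12 z : z \in P -> lab t1 z = lab t2 z.
  move=> zP; rewrite -(gP t1).2 // -(gP t2).2 //; apply: cot_loss_agree; first exact: TP.
  by move=> q /(PQ z zP) qQ; have := g12 (SeqSub qQ); rewrite !ffunE.
apply: eq_from_tnth => i; rewrite !(tnth_nth false).
by have := lab12 _ (mem_nth [::] (ltn_ord i)); rewrite /lab index_uniq.
Qed.

Lemma loss_shatters_sauer_bound (Y : finType) (F : (seq Y -> Y) -> Prop) T n
    (P : seq (seq Y)) :
  uniq P -> all (fun z => T <= size z) P -> vc_shatters (loss_class F T) P ->
  (forall P', uniq P' -> nat_shatters F P' -> size P' <= n) ->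
  2 ^ size P <= sauer_bound 'C(#|Y|, 2) (size P * T) n.
Proof.
move=> uP TP shP dimF; set Q := undup (flatten [seq cot_queries T z | z <- P]).
have PQ z : z \in P -> {subset cot_queries T z <= Q}.
  move=> zP q qz; rewrite mem_undup; apply/flattenP.
  by exists (cot_queries T z) => //; apply: map_f.
have [H [<- HF]] := loss_shatters_traces uP TP shP PQ.
have [_ [[f _] _]] := shP predT; set y0 := f [::].
have cardQ : #|[set: seq_sub Q]| <= size P * T.
  rewrite cardsT card_seq_sub ?undup_uniq //; apply: leq_trans (size_undup _) _.
  rewrite size_flatten /shape -map_comp; elim: (P) => //= z s IH.
  by rewrite size_map size_iota mulSn leq_add2l.
apply: leq_trans (leq_sauer_bound _ _ cardQ).
apply: (@card_le_sauer_bound _ _ y0 _ _ setT H erefl) => [h _|S _ shS].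
  by apply/ffunP => i; rewrite ffunE inE.
have := dimF _ _ (nat_shatters_trace y0 HF shS).
rewrite size_map -cardE; apply.
by rewrite map_inj_uniq ?enum_uniq //; apply: val_inj.
Qed.

Section RealBounds.

Local Open Scope R_scope.

Lemma INR_addn m n : INR (m + n) = INR m + INR n.
Proof. exact: plus_INR. Qed.

Lemma INR_muln m n : INR (m * n) = INR m * INR n.
Proof. exact: mult_INR. Qed.

Lemma INR_expn m n : INR (m ^ n) = INR m ^ n.
Proof. by elim: n => //= n IH; rewrite expnS INR_muln IH. Qed.

Lemma exp_pow a n : exp a ^ n = exp (INR n * a).
Proof.
elim: n => [|n IH]; first by rewrite Rmult_0_l exp_0.
by rewrite S_INR /= IH -exp_plus; congr exp; ring.
Qed.

Lemma ln_le x y : 0 < x -> x <= y -> ln x <= ln y.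
Proof. by move=> x0 [xy|<-]; [left; apply: ln_increasing | right]. Qed.

Lemma ln_le_sub1 x : 0 < x -> ln x <= x - 1.
Proof. by move=> x0; have := exp_ineq1_le (ln x); rewrite exp_ln //; lra. Qed.

Lemma ln2_gt0 : 0 < ln 2.
Proof. by have := ln_lt_2; lra. Qed.

Lemma ln2_lt1 : ln 2 < 1.
Proof.
rewrite -[X in _ < X]ln_exp; apply: ln_increasing; first lra.
by have := exp_ineq1 1; lra.
Qed.

Lemma log2_ge1 x : 2 <= x -> 1 <= log2 x.
Proof.
move=> x2; have l2 := ln2_gt0; apply: (Rmult_le_reg_r (ln 2)) => //.
rewrite /log2 Rmult_1_l /Rdiv Rmult_assoc Rinv_l ?Rmult_1_r; [apply: ln_le | ]; lra.
Qed.

Lemma le_log2_of_mul_ln2_le x B : 0 < x -> 0 < B ->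
  x * ln 2 <= ln (x * B) -> x <= 2 * log2 (2 * B / (exp 1 * ln 2)).
Proof.
move=> x0 B0; have l2 := ln2_gt0; have e0 := exp_pos 1.
set y := x * ln 2 / 2; set C := 2 * B / ln 2.
have y0 : 0 < y by rewrite /y; nra.
have C0 : 0 < C.
  by rewrite /C /Rdiv; apply: Rmult_lt_0_compat; [lra | apply: Rinv_0_lt_compat].
have -> : x * B = y * C by rewrite /y /C; field; lra.
have -> : 2 * B / (exp 1 * ln 2) = C * / exp 1 by rewrite /C; field; lra.
have lnCe : ln (C * / exp 1) = ln C - 1.
  by rewrite ln_mult ?ln_Rinv ?ln_exp //; apply: Rinv_0_lt_compat.
(* [ln y <= y - 1] turns [2 y <= ln y + ln C] into [y <= ln C - 1]. *)
rewrite ln_mult // /log2 lnCe => xln2; have lny := ln_le_sub1 y0.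
apply: (Rmult_le_reg_r (ln 2)) => //.
have -> : 2 * ((ln C - 1) / ln 2) * ln 2 = 2 * (ln C - 1) by field; lra.
by rewrite /y in lny xln2 *; lra.
Qed.

Lemma le_mul_log2_of_pow2_le (m d : nat) B : exp 1 * ln 2 <= B ->
  ((d < m)%N -> 2 ^ m <= (INR m / INR d * B) ^ d) ->
  INR m <= 3 * INR d * log2 (2 * B / (exp 1 * ln 2)).
Proof.
move=> eB pow2m; have l2 := ln2_gt0; have l21 := ln2_lt1; have e0 := exp_pos 1.
have B0 : 0 < B by nra.
have L1 : 1 <= log2 (2 * B / (exp 1 * ln 2)).
  apply: log2_ge1; apply: (Rmult_le_reg_r (exp 1 * ln 2)); first nra.
  by rewrite /Rdiv Rmult_assoc Rinv_l; nra.
have d0 := pos_INR d.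
have [md|dm] := leqP m d; first by have := le_INR _ _ (elimT leP md); nra.
have {}pow2m := pow2m dm.
have [d0'|dpos] := posnP d.
  have : 2 ^ 1 <= 2 ^ m by apply: Rle_pow; [lra | apply/leP; lia].
  by move: pow2m; rewrite d0' /=; lra.
have dR : 0 < INR d by apply: lt_0_INR; apply/ltP.
set x := INR m / INR d.
have x0 : 0 < x by apply: Rdiv_lt_0_compat => //; apply: lt_0_INR; apply/ltP; lia.
have xln2 : x * ln 2 <= ln (x * B).
  apply: (Rmult_le_reg_l (INR d)) => //.
  have -> : INR d * (x * ln 2) = INR m * ln 2 by rewrite /x; field; lra.
  have xB0 : 0 < x * B by nra.
  have := ln_le (pow_lt 2 m ltac:(lra)) pow2m.
  by rewrite !ln_pow //; lra.
have := le_log2_of_mul_ln2_le x0 B0 xln2.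
have -> : INR m = INR d * x by rewrite /x; field; lra.
nra.
Qed.

Lemma sauer_bound_le_pow c N n a : 0 < a <= 1 ->
  INR (sauer_bound c N n) * a ^ n <= (1 + INR c * a) ^ N.
Proof.
move=> a01; have ca : 0 <= INR c * a by have := pos_INR c; nra.
elim: N n => [|N IH] [|n] /=; rewrite ?sauer_bound0 /=.
- lra.
- by have := pow_incr a 1 n ltac:(lra); rewrite pow1; nra.
- by have := pow_R1_Rle (1 + INR c * a) N ltac:(lra); nra.
rewrite INR_addn INR_muln; have := IH n.+1; have := IH n.
have := pos_INR (sauer_bound c N n); have := pow_le a n ltac:(lra).
simpl; nra.
Qed.

Lemma sauer_bound1_le N M d : (d <= M)%N -> (N <= M)%N ->
  INR (sauer_bound 1 N d) <= (exp 1 * INR M / INR d) ^ d.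
Proof.
have [->|d0] := posnP d => dM NM; first by rewrite sauer_bound0 /=; lra.
have dR : 0 < INR d by apply: lt_0_INR; apply/ltP.
have MR : 0 < INR M by apply: lt_0_INR; apply/ltP; lia.
set a := INR d / INR M.
have a01 : 0 < a <= 1.
  split; first exact: Rdiv_lt_0_compat.
  apply: (Rmult_le_reg_r (INR M)) => //; rewrite /a /Rdiv Rmult_assoc Rinv_l; last lra.
  by rewrite Rmult_1_r Rmult_1_l; apply: le_INR; apply/leP.
have ad0 : 0 < a ^ d by apply: pow_lt; lra.
apply: (Rmult_le_reg_r (a ^ d)) => //.
have -> : (exp 1 * INR M / INR d) ^ d * a ^ d = exp 1 ^ d.
  by rewrite -Rpow_mult_distr; congr pow; rewrite /a; field; lra.
apply: Rle_trans (_ : INR (sauer_bound 1 M d) * a ^ d <= _).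
  by apply: Rmult_le_compat_r; [lra | apply: le_INR; apply/leP; apply: leq_sauer_bound].
apply: Rle_trans (sauer_bound_le_pow 1 M d a01) _; rewrite Rmult_1_l.
apply: Rle_trans (_ : exp a ^ M <= _).
  by apply: pow_incr; have := exp_ineq1_le a; lra.
by rewrite !exp_pow; apply: Req_le; congr exp; rewrite /a; field; lra.
Qed.

End RealBounds.

Section LossClassBounds.

Local Open Scope R_scope.

Lemma loss_shatters_size_le_bool (F : (seq bool -> bool) -> Prop) T d
    (P : seq (seq bool)) :
  (0 < T)%N -> (forall P', uniq P' -> vc_shatters F P' -> (size P' <= d)%N) ->
  uniq P -> all (fun z => (T <= size z)%N) P -> vc_shatters (loss_class F T) P ->
  INR (size P) <= 3 * INR d * log2 (2 * INR T / ln 2).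
Proof.
move=> T0 dimF uP TP shP; have l21 := ln2_lt1; have e0 := exp_pos 1.
have T1 : 1 <= INR T by apply: (le_INR 1); apply/leP.
have dimF' P' : uniq P' -> nat_shatters F P' -> (size P' <= d)%N.
  by move=> uP' /nat_shatters_vc; apply: dimF.
have := loss_shatters_sauer_bound uP TP shP dimF'; rewrite card_bool => pow2m.
have -> : 2 * INR T / ln 2 = 2 * (exp 1 * INR T) / (exp 1 * ln 2).
  by field; have := ln2_gt0; lra.
apply: le_mul_log2_of_pow2_le => [|dm]; first nra.
have := le_INR _ _ (elimT leP pow2m); rewrite INR_expn /= => /Rle_trans; apply.
have dmT : (d <= size P * T)%N by apply: leq_trans (ltnW dm) (leq_pmulr _ T0).
apply: Rle_trans (sauer_bound1_le dmT (leqnn _)) _.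
by rewrite INR_muln; apply: Req_le; congr pow; rewrite /Rdiv; ring.
Qed.

Lemma loss_shatters_size_le (Sigma : finType) (F : (seq Sigma -> Sigma) -> Prop) T n
    (P : seq (seq Sigma)) :
  (0 < T)%N -> is_Ndim F n ->
  uniq P -> all (fun z => (T <= size z)%N) P -> vc_shatters (loss_class F T) P ->
  INR (size P) <=
    3 * INR n * log2 (2 * INR n * INR #|Sigma| ^ 2 * INR T / (exp 1 * ln 2)).
Proof.
move=> T0 [[P' [_ [sizeP' shP']]] dimF] uP TP shP.
have pow2m := loss_shatters_sauer_bound uP TP shP dimF.
have [n0|n0] := posnP n.
  have -> : size P = 0%N.
    by move: pow2m; rewrite n0 sauer_bound0; have := ltn_expl (size P) (ltnSn 1); lia.
  by rewrite n0 /=; lra.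
have k2 : (1 < #|Sigma|)%N.
  have [h0 [h1 [h01 _]]] := shP'; apply/card_gt1P.
  exists (h0 (nth [::] P' 0)), (h1 (nth [::] P' 0)); split=> //.
  by apply: h01; apply: mem_nth; rewrite sizeP'.
set k := #|Sigma| in k2 pow2m *.
have -> : 2 * INR n * INR k ^ 2 * INR T / (exp 1 * ln 2) =
          2 * (INR n * INR k ^ 2 * INR T) / (exp 1 * ln 2) by rewrite /Rdiv; ring.
apply: le_mul_log2_of_pow2_le => [|nm].
  have := exp_le_3; have := ln2_gt0; have := ln2_lt1.
  have : 1 <= INR T by apply: (le_INR 1); apply/leP.
  have : 4 <= INR n * INR k ^ 2.
    have : 2 <= INR k by apply: (le_INR 2); apply/leP.
    have : 1 <= INR n by apply: (le_INR 1); apply/leP.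
    simpl; nra.
  nra.
have mT : (0 < size P * T)%N by rewrite muln_gt0 T0 andbT; apply: leq_ltn_trans nm.
have : (2 ^ size P <= (size P * T * k ^ 2) ^ n)%N.
  apply: leq_trans pow2m (leq_trans (sauer_bound_le_expn _ _ _) _).
    by rewrite bin_gt0.
  rewrite leq_exp2r //; have := odd_double_half (k * k.-1); rewrite -bin2 -mul2n.
  nia.
move=> /leP/le_INR; rewrite !INR_expn !INR_muln => /Rle_trans; apply; apply: Req_le.
by congr pow; field; apply: not_0_INR; lia.
Qed.

End LossClassBounds.

Theorem theoremB5 (T : nat) (hT : (0 < T)%N) :
  (forall (F : (seq bool -> bool) -> Prop) (d : nat),
     is_VCdim F d ->
     forall P : seq (seq bool),
       uniq P -> all (fun z => (T <= size z)%N) P ->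
       vc_shatters (loss_class F T) P ->
       (INR (size P) <= 3 * INR d * log2 (2 * INR T / ln 2))%R)
  /\
  (forall (Sigma : finType), #|Sigma| <> 2 ->
   forall (F : (seq Sigma -> Sigma) -> Prop) (n : nat),
     is_Ndim F n ->
     forall P : seq (seq Sigma),
       uniq P -> all (fun z => (T <= size z)%N) P ->
       vc_shatters (loss_class F T) P ->
       (INR (size P) <= 3 * INR n *
          log2 (2 * INR n * INR #|Sigma| ^ 2 * INR T / (exp 1 * ln 2)))%R).
Proof.
(* The bound for general alphabets also holds when |Sigma| = 2. *)
split=> [F d [_ dimF] | Sigma _ F n dimF] P uP TP shP.
  exact: loss_shatters_size_le_bool dimF uP TP shP.
exact: loss_shatters_size_le dimF uP TP shP.
Qed.
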